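(* Let $k>t+1$, $n>2k-t$, and let $\mathcal{S}_a$ be a maximal set of $k$-spaces in $\mathrm{AG}(n,q)$ pairwise intersecting in at least a $t$-space. Let $\psi(\mathcal{S}_a)=\min\{\dim T: T\text{ an affine subspace},\ \dim(T\cap\alpha)\geq t\ \forall\alpha\in\mathcal{S}_a\}$ and suppose $\psi(\mathcal{S}_a)=t+x$ with $x\geq 2$. Then for each $j\in\{0,1,\dots,x\}$, the number of elements of $\mathcal{S}_a$ containing any given affine $(t+x-j)$-space is at most $(\theta_{k-t})^j\left[{n-t-x\atop k-t-x}\right]_q$.
   Context: Affine subspaces intersect in at least a $t$-space if their affine intersection has dimension at least $t$. $\left[{n\atop k}\right]_q=\frac{(q^n-1)\cdots(q^{n-k+1}-1)}{(q^k-1)\cdots(q-1)}$ for $k>0$, $=1$ for $k=0$; $\theta_m=\frac{q^{m+1}-1}{q-1}$. Maximal means no further affine $k$-space can be added keeping the property. *)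

(* AG(n,q) is modelled as the vectors 'rV[F]_n over a finite field F, q = #|F|. *)
From HB Require Import structures.
From mathcomp Require Import all_boot all_order all_algebra all_field.
Set Implicit Arguments. Unset Strict Implicit. Unset Printing Implicit Defensive.
Import GRing.Theory.
Local Open Scope ring_scope.

Section AG.
Variables (F : finFieldType) (n : nat).
Local Notation pt := 'rV[F]_n.

Definition is_aff_space (A : {set pt}) (d : nat) : Prop :=
  exists (v : pt) (W : {vspace pt}), (\dim W = d)%N /\ A = [set x | (x - v) \in W].

Definition meet_ge (A B : {set pt}) (t : nat) : Prop :=
  exists d, (t <= d)%N /\ is_aff_space (A :&: B) d.

Definition t_intersecting (S : {set {set pt}}) (k t : nat) : Prop :=
  (forall A, A \in S -> is_aff_space A k) /\
  (forall A B, A \in S -> B \in S -> A != B -> meet_ge A B t).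

Definition maximal_t_intersecting (S : {set {set pt}}) (k t : nat) : Prop :=
  t_intersecting S k t /\
  (forall B, is_aff_space B k -> B \notin S -> ~ t_intersecting (B |: S) k t).

Definition psi_eq (S : {set {set pt}}) (t m : nat) : Prop :=
  (exists T, is_aff_space T m /\ forall A, A \in S -> meet_ge T A t) /\
  (forall T d, is_aff_space T d -> (forall A, A \in S -> meet_ge T A t) -> (m <= d)%N).

End AG.

Definition gauss_binom (q N K : nat) : nat :=
  ((\prod_(i < K) (q ^ (N - i) - 1)) %/ (\prod_(i < K) (q ^ i.+1 - 1)))%N.

Definition theta (q m : nat) : nat := (\sum_(i < m.+1) q ^ i)%N.

From HB Require Import structures.
From mathcomp Require Import all_boot all_order all_algebra all_field zify.
From Stdlib Require Import Classical.
Set Implicit Arguments. Unset Strict Implicit. Unset Printing Implicit Defensive.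
Import GRing.Theory.

(* Double counting.  An affine m-space U lies in at most [n-m, k-m]_q affine
   k-spaces: count the pairs (y, B) with B a k-space through U and U + <y> inside B.
   Below psi(S) = t + x, a space U of dimension t + x - j is not a valid T, so some
   A in S meets U in less than a t-space, while every B in S through U meets A in
   a t-space.  Then the direction of B meets a fixed space Vs (the direction of A,
   or of the span of A and U when they are disjoint) in an s-space not contained
   in the direction W of U, with dim Vs - s = k - t.  A subspace Y of Vs of
   dimension at most dim (W :&: Vs) + k - t + 1 meets all these directions outside
   W, so each such B contains U + <y> for at least a fraction 1 / theta_(k-t) of
   the y in Y outside W: going down one dimension costs a factor theta_(k-t). *)

Definition nthrough (T : finType) (S : {set {set T}}) (U : {set T}) : nat :=
  #|[set B in S | U \subset B]|.

Lemma card_set_sum (T : finType) (A : {set T}) (P : pred T) :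
  #|[set x in A | P x]| = \sum_(x in A) P x.
Proof.
rewrite -sum1_card big_mkcond [RHS]big_mkcond /=.
by apply: eq_bigr => x _; rewrite inE; case: (x \in A); case: (P x).
Qed.

Lemma double_count (T I : finType) (S : {set {set T}}) (U : {set T})
    (Ys : {set I}) (g : I -> {set T}) c :
  (forall B, B \in S -> U \subset B -> c <= #|[set y in Ys | g y \subset B]|) ->
  c * nthrough S U <= \sum_(y in Ys) nthrough S (g y).
Proof.
move=> hc; rewrite mulnC -sum_nat_const.
under [X in _ <= X]eq_bigr do rewrite /nthrough card_set_sum.
rewrite exchange_big /= big_mkcond [X in _ <= X]big_mkcond /=.
apply: leq_sum => B _; rewrite inE.
case: (B \in S) (hc B) => //=; case: (U \subset B) => // /(_ isT isT).
by rewrite card_set_sum.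
Qed.

Lemma theta_geometric q m : 0 < q -> q.-1 * theta q m = q ^ m.+1 - 1.
Proof.
move=> q_gt0; elim: m => [|m IHm]; first by rewrite /theta big_ord1 muln1 subn1.
rewrite /theta big_ord_recr /= -/(theta q m) mulnDr IHm [q ^ m.+2]expnS.
have : 0 < q ^ m.+1 by rewrite expn_gt0 q_gt0.
nia.
Qed.

Lemma subn_expn q a b : a <= b -> q ^ b - q ^ a = q ^ a * (q ^ (b - a) - 1).
Proof. by move=> leab; rewrite mulnBr muln1 -expnD subnKC. Qed.

Lemma leq_mul_theta q d e r N M : 1 < q -> e <= r.+1 ->
  (q ^ d.+1 - q ^ d) * N <= (q ^ (d + e) - q ^ d) * M -> N <= theta q r * M.
Proof.
move=> q_gt1 le_er; have q_gt0 : 0 < q := ltnW q_gt1.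
rewrite !subn_expn ?leq_addr // subSnn addKn expn1 -!mulnA leq_pmul2l ?expn_gt0 ?q_gt0 //.
move=> le_NM; rewrite -(@leq_pmul2l (q - 1)) ?subn_gt0 //; apply: leq_trans le_NM _.
rewrite mulnA leq_mul2r (subn1 q) theta_geometric //.
by apply/orP; right; apply: leq_sub2r; rewrite leq_pexp2l.
Qed.

Definition gauss_num q N K := \prod_(i < K) (q ^ (N - i) - 1).
Definition gauss_den q K := \prod_(i < K) (q ^ i.+1 - 1).

Lemma gauss_binomE q N K : gauss_binom q N K = gauss_num q N K %/ gauss_den q K.
Proof. by []. Qed.

Lemma gauss_den_gt0 q K : 1 < q -> 0 < gauss_den q K.
Proof. by move=> q_gt1; apply: prodn_gt0 => i; rewrite subn_gt0 -{1}(expn0 q) ltn_exp2l. Qed.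

Lemma gauss_numS q N K : gauss_num q N K.+1 = (q ^ N - 1) * gauss_num q N.-1 K.
Proof.
rewrite /gauss_num big_ord_recl subn0; congr (_ * _).
by apply: eq_bigr => i _; congr (q ^ _ - 1); rewrite lift0; lia.
Qed.

Lemma gauss_denS q K : gauss_den q K.+1 = gauss_den q K * (q ^ K.+1 - 1).
Proof. by rewrite /gauss_den big_ord_recr. Qed.

Section AffineSubspaces.
Variables (F : finFieldType) (n : nat).
Local Notation pt := 'rV[F]_n.
Local Notation q := #|F|.
Implicit Types (u v a p x y : pt) (W V D Y Z : {vspace pt}) (U A B : {set pt}).
Local Open Scope ring_scope.

Definition aff u W : {set pt} := [set x | x - u \in W].

Lemma in_aff u W x : (x \in aff u W) = (x - u \in W).
Proof. by rewrite inE. Qed.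

Lemma aff_self u W : u \in aff u W.
Proof. by rewrite in_aff subrr mem0v. Qed.

Lemma aff_rebase u W p : p \in aff u W -> aff p W = aff u W.
Proof.
rewrite in_aff => Wpu; apply/setP => x; rewrite !in_aff.
have -> : x - u = (x - p) + (p - u) by rewrite addrA subrK.
by rewrite (rpredDr _ Wpu).
Qed.

Lemma aff_subset u W a V : u \in aff a V -> (W <= V)%VS -> aff u W \subset aff a V.
Proof.
rewrite in_aff => Vua /subvP sWV; apply/subsetP => x; rewrite !in_aff => Wxu.
have -> : x - a = (x - u) + (u - a) by rewrite addrA subrK.
exact: rpredD (sWV _ Wxu) Vua.
Qed.

Lemma aff_subset_dir u W a V : aff u W \subset aff a V -> (W <= V)%VS.
Proof.
move/subsetP => sUA; have := sUA u (aff_self u W); rewrite in_aff => Vua.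
apply/subvP => w Ww; have := sUA (w + u); rewrite !in_aff addrK => /(_ Ww).
by rewrite -addrA (rpredDr _ Vua).
Qed.

Lemma is_aff_spaceP U d :
  is_aff_space U d <-> exists u W, U = aff u W /\ \dim W = d.
Proof. by split=> [[u [W [dW eU]]] | [u [W [eU dW]]]]; exists u, W. Qed.

Lemma is_aff_space_aff u W : is_aff_space (aff u W) (\dim W).
Proof. by apply/is_aff_spaceP; exists u, W. Qed.

Lemma is_aff_space_dim U d u W : is_aff_space U d -> U = aff u W -> d = \dim W.
Proof.
case/is_aff_spaceP => v [W' [-> <-]] eU.
have sWW' : (W <= W')%VS by apply: (@aff_subset_dir u W v); rewrite -eU.
have sW'W : (W' <= W)%VS by apply: (@aff_subset_dir v W' u); rewrite eU.
by apply/eqP; rewrite eqn_leq !dimvS.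
Qed.

Lemma aff_cap p u W a V : p \in aff u W -> p \in aff a V ->
  aff u W :&: aff a V = aff p (W :&: V)%VS.
Proof.
move=> Up Ap; rewrite -(aff_rebase Up) -(aff_rebase Ap).
by apply/setP => x; rewrite !inE memv_cap.
Qed.

Lemma meet_ge_affP u W a V t :
  meet_ge (aff u W) (aff a V) t <->
  exists2 p, (p \in aff u W) && (p \in aff a V) & (t <= \dim (W :&: V))%N.
Proof.
split=> [[d [le_td UA]] | [p /andP[Up Ap] le_t]].
  have [v [W' [_ eU]]] := UA.
  have : v \in aff u W :&: aff a V by rewrite eU inE subrr mem0v.
  rewrite inE => /andP[Uv Av].
  by exists v; rewrite ?Uv ?Av // -(is_aff_space_dim UA (aff_cap Uv Av)).
by exists (\dim (W :&: V)); rewrite (aff_cap Up Ap); split; last exact: is_aff_space_aff.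
Qed.

Lemma dim_add_line W y : y \notin W -> \dim (W + <[y]>) = (\dim W).+1.
Proof.
move=> Wy; have y_neq0 : y != 0 by apply: contraNneq Wy => ->; rewrite mem0v.
have : (\dim (W :&: <[y]>) < \dim <[y]>)%N.
  by rewrite (ltn_leqif (dimv_leqif_sup (capvSr _ _))) subv_cap subvv andbT -memvE.
move: (dimv_sum_cap W <[y]>); rewrite dim_vline y_neq0; lia.
Qed.

Lemma card_vspaceD D Y : (D <= Y)%VS ->
  #|[set y in Y | y \notin D]| = (q ^ \dim Y - q ^ \dim D)%N.
Proof.
move=> sDY; have -> : [set y in Y | y \notin D] = [set y in Y] :\: [set y in D].
  by apply/setP => y; rewrite !inE andbC.
rewrite cardsD (setIidPr _) ?cardsE ?card_vspace //.
by apply/subsetP => y; rewrite !inE; apply: (subvP sDY).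
Qed.

Lemma exists_vspace_between D V r : (D <= V)%VS -> (\dim D <= r)%N -> (r <= \dim V)%N ->
  exists2 Y, (D <= Y)%VS && (Y <= V)%VS & \dim Y = r.
Proof.
move=> sDV; elim: r => [|r IHr] le_Dr le_rV.
  by exists D; rewrite ?subvv ?sDV //; apply/eqP; rewrite -leqn0.
have [le_Dr' | lt_rD] := leqP (\dim D) r; last first.
  by exists D; rewrite ?subvv ?sDV //; apply/eqP; rewrite eqn_leq le_Dr.
have [Y /andP[sDY sYV] dimY] := IHr le_Dr' (ltnW le_rV).
have /subvPn[v Vv Yv] : ~~ (V <= Y)%VS.
  by apply: contraTN le_rV => /dimvS; rewrite dimY -leqNgt.
exists (Y + <[v]>)%VS; last by rewrite dim_add_line // dimY.
by rewrite (subv_trans sDY (addvSl _ _)) subv_add sYV -memvE.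
Qed.

Lemma exists_blocking_vspace D V s : (D <= V)%VS -> (s <= \dim V)%N ->
  exists2 Y, [/\ (D <= Y)%VS, (Y <= V)%VS & (\dim Y <= (\dim D + (\dim V - s)).+1)%N] &
  forall Z, (D <= Z)%VS -> (Z <= V)%VS -> (s <= \dim Z)%N -> ~~ (Z <= D)%VS ->
    (\dim D < \dim (Y :&: Z))%N.
Proof.
move=> sDV le_sV; have [lt_Ds | le_sD] := ltnP (\dim D) s; last first.
  exists V; first by split; rewrite ?subvv //; lia.
  move=> Z sDZ sZV _ nsZD; rewrite (capv_idPr sZV).
  by rewrite (ltn_leqif (dimv_leqif_sup sDZ)).
have [||Y /andP[sDY sYV] dimY] := @exists_vspace_between D V (\dim D + (\dim V - s)).+1 sDV.
- exact: leqW (leq_addr _ _).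
- lia.
exists Y => [|Z _ sZV le_sZ _]; first by split; rewrite ?dimY.
have : (\dim (Y + Z) <= \dim V)%N by apply: dimvS; rewrite subv_add sYV.
move: (dimv_sum_cap Y Z); lia.
Qed.

Lemma card_line_extensions_ge u W WB D Z (Ys : {set pt}) :
  (W <= WB)%VS -> (D <= Z)%VS -> (Z <= WB)%VS -> [set y in Z | y \notin D] \subset Ys ->
  (q ^ \dim Z - q ^ \dim D <= #|[set y in Ys | aff u (W + <[y]>) \subset aff u WB]|)%N.
Proof.
move=> sWWB sDZ sZWB sZDY; rewrite -card_vspaceD //; apply/subset_leq_card/subsetP => y ZDy.
rewrite inE (subsetP sZDY _ ZDy) /=; apply: aff_subset; first exact: aff_self.
by move: ZDy; rewrite inE subv_add sWWB -memvE => /andP[/(subvP sZWB)].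
Qed.

Lemma meet_ge_subset u W a V t : aff u W \subset aff a V -> (t <= \dim W)%N ->
  meet_ge (aff u W) (aff a V) t.
Proof.
move=> sUA le_tW; apply/meet_ge_affP; exists u.
  by rewrite aff_self (subsetP sUA _ (aff_self u W)).
by rewrite (capv_idPl (aff_subset_dir sUA)).
Qed.

Lemma dim_fullv_rV : \dim (fullv : {vspace pt}) = n.
Proof. by rewrite dimvf dim_matrix mul1r. Qed.

End AffineSubspaces.

Section CountingThroughKSpaces.
Variables (F : finFieldType) (n : nat) (S : {set {set 'rV[F]_n}}) (k : nat).
Hypothesis S_kspaces : forall B, B \in S -> is_aff_space B k.
Local Notation pt := 'rV[F]_n.
Local Notation q := #|F|.

Lemma kspace_containing_aff u W B : B \in S -> aff u W \subset B ->
  exists2 WB, B = aff u WB & (W <= WB)%VS && (\dim WB == k).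
Proof.
move=> SB; have /is_aff_spaceP[b [WB [-> dWB]]] := S_kspaces SB => sUB.
exists WB; last by rewrite (aff_subset_dir sUB) dWB /=.
by rewrite (aff_rebase (subsetP sUB _ (aff_self u W))).
Qed.

Lemma nthrough_kspace_le1 u W : \dim W = k -> nthrough S (aff u W) <= 1.
Proof.
move=> dW; rewrite /nthrough -[X in _ <= X](cards1 (aff u W)).
apply/subset_leq_card/subsetP => B; rewrite !inE => /andP[SB sUB]; have [WB -> /andP[sWWB /eqP dWB]] := kspace_containing_aff SB sUB.
suff /eqP -> : W == WB by [].
by rewrite eqEdim sWWB /= dWB dW.
Qed.

Lemma nthrough_mul_gauss_den u W i : \dim W + i = k ->
  nthrough S (aff u W) * gauss_den q i <= gauss_num q (n - \dim W) i.
Proof.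
elim: i u W => [|i IHi] u W dWi.
  by rewrite /gauss_den /gauss_num !big_ord0 muln1; apply: nthrough_kspace_le1; rewrite -dWi addn0.
have q_gt1 : 1 < q := finNzRing_gt1 F.
have le_Wn : \dim W <= n by have := dimvS (subvf W); rewrite dim_fullv_rV.
set Ys := [set y in (fullv : {vspace pt}) | y \notin W].
have per_B B : B \in S -> aff u W \subset B ->
    q ^ k - q ^ \dim W <= #|[set y in Ys | aff u (W + <[y]>) \subset B]|.
  move=> SB sUB; have [WB -> /andP[sWWB /eqP <-]] := kspace_containing_aff SB sUB.
  apply: card_line_extensions_ge => //; apply/subsetP => y.
  by rewrite !inE memvf => /andP[_ ->].
have sum_bound : (\sum_(y in Ys) nthrough S (aff u (W + <[y]>))) * gauss_den q i
    <= #|Ys| * gauss_num q (n - (\dim W).+1) i.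
  rewrite big_distrl -sum_nat_const; apply: leq_sum => y; rewrite inE => /andP[_ Wy].
  by rewrite -(dim_add_line Wy); apply: IHi; rewrite dim_add_line // addSnnS.
have := leq_trans (leq_mul (double_count per_B) (leqnn (gauss_den q i))) sum_bound.
rewrite card_vspaceD ?subvf // dim_fullv_rV -dWi !subn_expn ?leq_addr // addKn.
rewrite -!mulnA leq_pmul2l ?expn_gt0 ?(ltnW q_gt1) // gauss_denS gauss_numS -subnS.
by rewrite (mulnC (gauss_den q i)) mulnCA.
Qed.

Lemma nthrough_le_gauss_binom U m : is_aff_space U m ->
  nthrough S U <= gauss_binom q (n - m) (k - m).
Proof.
case/is_aff_spaceP => u [W [-> dW]]; have [le_mk | lt_km] := leqP m k.
  rewrite gauss_binomE leq_divRL ?gauss_den_gt0 ?finNzRing_gt1 // -dW.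
  by apply: nthrough_mul_gauss_den; rewrite dW subnKC.
rewrite /nthrough; suff -> : [set B in S | aff u W \subset B] = set0 by rewrite cards0.
apply/setP => B; rewrite !inE; apply/andP => -[SB sUB].
have [WB _ /andP[/dimvS]] := kspace_containing_aff SB sUB; rewrite dW => le_mWB /eqP dWB.
by move: lt_km; rewrite -dWB ltnNge le_mWB.
Qed.

End CountingThroughKSpaces.

Section ThetaBound.
Variables (F : finFieldType) (n : nat).
Local Notation pt := 'rV[F]_n.
Local Notation q := #|F|.
Implicit Types (u : pt) (W V WB : {vspace pt}).

Lemma nthrough_le_theta (S : {set {set pt}}) u W V s r M :
  s <= \dim V -> \dim V - s <= r ->
  (forall B, B \in S -> aff u W \subset B -> exists2 WB, B = aff u WB &
     [/\ (W <= WB)%VS, s <= \dim (WB :&: V) & ~~ (WB :&: V <= W)%VS]) ->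
  (forall y, y \notin W -> nthrough S (aff u (W + <[y]>)) <= M) ->
  nthrough S (aff u W) <= theta q r * M.
Proof.
move=> le_sV le_Vr S_dir le_M; have q_gt1 : 1 < q := finNzRing_gt1 F.
set D := (W :&: V)%VS.
have [Y [sDY sYV dimY] blockY] := exists_blocking_vspace (capvSr W V : (D <= V)%VS) le_sV.
set Ys := [set y in Y | y \notin D].
have per_B B : B \in S -> aff u W \subset B ->
    q ^ (\dim D).+1 - q ^ \dim D <= #|[set y in Ys | aff u (W + <[y]>) \subset B]|.
  move=> SB sUB; have [WB -> [sWWB le_s nsW]] := S_dir B SB sUB.
  have sDX : (D <= WB :&: V)%VS by apply: capvS.
  have nsXD : ~~ (WB :&: V <= D)%VS by apply: contra nsW => /subv_trans; apply; apply: capvSl.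
  have lt_D := blockY _ sDX (capvSr _ _) le_s nsXD.
  apply: leq_trans (card_line_extensions_ge (D := D) (Z := (Y :&: (WB :&: V))%VS) u sWWB _ _ _).
  - by apply: leq_sub2r; rewrite leq_pexp2l ?(ltnW q_gt1).
  - by rewrite subv_cap sDY.
  - exact: subv_trans (capvSr _ _) (capvSl _ _).
  - by apply/subsetP => y; rewrite !inE memv_cap => /andP[/andP[-> _] ->].
have sum_bound : \sum_(y in Ys) nthrough S (aff u (W + <[y]>)) <= #|Ys| * M.
  rewrite -sum_nat_const; apply: leq_sum => y; rewrite inE => /andP[Yy Dy]; apply: le_M.
  by apply: contra Dy => Wy; rewrite memv_cap Wy (subvP sYV).
have le_DY := dimvS sDY.
apply: (@leq_mul_theta q (\dim D) (\dim Y - \dim D)) => //.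
  by rewrite leq_subLR (leq_trans dimY) // -addnS leq_add2l ltnS.
by rewrite subnKC // -card_vspaceD //; apply: leq_trans (double_count per_B) sum_bound.
Qed.

End ThetaBound.

Section MeetingDirection.
Variables (F : finFieldType) (n : nat).
Local Notation pt := 'rV[F]_n.
Implicit Types (u a p : pt) (W V WB : {vspace pt}).
Local Open Scope ring_scope.

Lemma exists_meeting_direction u W a V k t : \dim V = k -> (t <= k)%N ->
  ~ meet_ge (aff u W) (aff a V) t ->
  exists Vs s, [/\ (s <= \dim Vs)%N, (\dim Vs - s <= k - t)%N &
    forall WB, (W <= WB)%VS -> meet_ge (aff u WB) (aff a V) t ->
      (s <= \dim (WB :&: Vs))%N /\ ~~ (WB :&: Vs <= W)%VS].
Proof.
move=> dV le_tk nUA.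
have [/existsP[p0 Ap0] | UA0] := boolP [exists p, (p \in aff u W) && (p \in aff a V)].
  have lt_WV : (\dim (W :&: V) < t)%N.
    by rewrite ltnNge; apply/negP => le_t; apply: nUA; apply/meet_ge_affP; exists p0.
  exists V, t; split; rewrite ?dV ?subnn //.
  move=> WB sWWB /meet_ge_affP[p _ le_t]; split => //.
  apply: contraTN le_t => sXW; rewrite -ltnNge (leq_ltn_trans _ lt_WV) //.
  by apply: dimvS; rewrite subv_cap sXW capvSr.
(* For U and A disjoint, a point p of B :&: A gives a direction p - u of B lying in
   V + <[c]> but neither in V nor in W. *)
pose c : pt := a - u.
have Vc : c \notin V.
  apply: contraNN UA0 => Vc; apply/existsP; exists u.
  rewrite aff_self in_aff (_ : u - a = - c) ?rpredN //.
  by rewrite /c opprB.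
exists (V + <[c]>)%VS, t.+1; rewrite dim_add_line // dV; split; [lia | lia |].
move=> WB sWWB /meet_ge_affP[p /andP[UBp Ap] le_t]; pose z : pt := p - u.
have WBz : z \in WB by rewrite -in_aff.
have Apa : p - a \in V by rewrite -in_aff.
have Vsz : z \in (V + <[c]>)%VS.
  have -> : z = (p - a) + c by rewrite /z /c addrA subrK.
  exact: memv_add Apa (memv_line c).
have Vz : z \notin V.
  apply: contra Vc => Vz; have -> : c = z - (p - a) by rewrite /c /z opprB [RHS]addrC addrA subrK.
  exact: rpredB.
have Wz : z \notin W.
  by apply: contraNN UA0 => Wz; apply/existsP; exists p; rewrite in_aff Wz.
split.
  have : ((WB :&: V) + <[z]> <= WB :&: (V + <[c]>))%VS.
    by rewrite subv_add -memvE memv_cap WBz Vsz capvS ?addvSl.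
  by move/dimvS; rewrite dim_add_line ?memv_cap ?negb_and ?Vz ?orbT //; apply: leq_trans.
by apply/subvPn; exists z; rewrite ?memv_cap ?WBz.
Qed.

End MeetingDirection.

Section DescentStep.
Variables (F : finFieldType) (n : nat) (S : {set {set 'rV[F]_n}}) (k t : nat).
Hypothesis S_tint : t_intersecting S k t.
Hypothesis le_tk : t <= k.
Local Notation q := #|F|.

Lemma nthrough_step U d A M : is_aff_space U d -> t <= d ->
  A \in S -> ~ meet_ge U A t ->
  (forall U', is_aff_space U' d.+1 -> U \subset U' -> nthrough S U' <= M) ->
  nthrough S U <= theta q (k - t) * M.
Proof.
case: S_tint => S_k S_meet /is_aff_spaceP[u [W [-> dW]]] le_td SA nUA le_M.
have /is_aff_spaceP[a [V [eA dV]]] := S_k A SA; rewrite eA in nUA.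
have [Vs [s [le_sVs le_Vs dir]]] := exists_meeting_direction dV le_tk nUA.
apply: (nthrough_le_theta le_sVs le_Vs) => [B SB sUB | y Wy].
  have [WB eB /andP[sWWB _]] := kspace_containing_aff S_k SB sUB.
  exists WB => //; have [|le_s nsW] := dir WB sWWB; last by split.
  rewrite -eB -eA; apply: S_meet => //; apply/eqP => eBA; apply: nUA.
  by apply: meet_ge_subset; rewrite ?dW // -eA -eBA.
apply: le_M; last exact: aff_subset (aff_self _ _) (addvSl _ _).
by rewrite -dW -(dim_add_line Wy); apply: is_aff_space_aff.
Qed.

End DescentStep.

Lemma psi_eq_not_meet_ge (F : finFieldType) n (S : {set {set 'rV[F]_n}}) t m U d :
  psi_eq S t m -> is_aff_space U d -> d < m -> exists2 A, A \in S & ~ meet_ge U A t.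
Proof.
case=> _ psi_min UD lt_dm; apply: NNPP => nA.
suff : m <= d by rewrite leqNgt lt_dm.
apply: (psi_min _ _ UD) => A SA; apply: NNPP => nUA; apply: nA; by exists A.
Qed.

Theorem mainTheorem12 (F : finFieldType) (n k t x : nat)
  (S : {set {set 'rV[F]_n}}) :
  (t.+1 < k)%N -> (2 * k - t < n)%N ->
  maximal_t_intersecting S k t ->
  psi_eq S t (t + x) -> (2 <= x)%N ->
  forall j : nat, (j <= x)%N ->
  forall U : {set 'rV[F]_n}, is_aff_space U (t + x - j) ->
  (#|[set A in S | U \subset A]| <=
     theta #|F| (k - t) ^ j * gauss_binom #|F| (n - t - x) (k - t - x))%N.
Proof.
move=> lt_tk _ [S_tint _] psiS _; have le_tk : t <= k by apply: ltnW (ltnW _).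
elim=> [|j IHj] le_jx U UD.
  rewrite subn0 in UD; rewrite expn0 mul1n -!subnDA.
  exact (nthrough_le_gauss_binom (proj1 S_tint) UD).
have [|A SA nUA] := psi_eq_not_meet_ge psiS UD.
  by rewrite ltn_subrL addn_gt0 (leq_trans _ le_jx) ?orbT.
rewrite expnS -mulnA; apply: (nthrough_step S_tint le_tk UD _ SA nUA); first lia.
move=> U' U'D _; apply: IHj; first lia.
by rewrite (_ : t + x - j = (t + x - j.+1).+1) //; lia.
Qed.
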